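(* There exist constants $\epsilon_1'>0$, $\tau_1'>0$ and $C>0$, depending only on $\underline{U}=(1,0)^{\top}$ and $a_\infty$, such that the following holds for all $\tau\in(0,\tau_1')$ and all states $U_L,\hat U_R,U_R$ in the $\epsilon_1'$-neighborhood of $\underline{U}$. (a) If $U_R=\Phi(\beta_1,\beta_2;U_L)$ and $U_R=\Phi(\alpha_1,\alpha_2;U_L,\tau^2)$, then $|\beta_j-\alpha_j|\le C(|\alpha_1|+|\alpha_2|)\tau^2$ for $j=1,2$. (b) If $U_R=\Phi(\beta_1,\beta_2;U_L)$, $\hat U_R=\Phi(\alpha_1,\alpha_2;U_L,\tau^2)$ and $\alpha=|U_R-\hat U_R|$, then $|\beta_j-\alpha_j|\le C(|\alpha_1|+|\alpha_2|)\tau^2+C\alpha$ for $j=1,2$.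
   Context: Fix $\gamma>1$ and $a_\infty>0$; states are $U=(\rho,v)^{\top}$. Velocity function. For $\tau>0$ let $$u(\rho,v;\tau^2)=\tau^{-2}\Big(-1+\sqrt{1-\tau^2\big(v^2+\tfrac{2(\rho^{\gamma-1}-1)}{(\gamma-1)a_\infty^2}\big)}\Big),$$ and let $u(\rho,v;0)=-\tfrac12v^2-\tfrac{\rho^{\gamma-1}-1}{(\gamma-1)a_\infty^2}$. Systems. Set $G(U,\tau^2)=(\rho(1+\tau^2u),v)^{\top}$ and $F(U,\tau^2)=(\rho v,-u)^{\top}$, and consider $\partial_xG(U,\tau^2)+\partial_yF(U,\tau^2)=0$. The $\tau=0$ system is $\partial_xU+\partial_yF(U,0)=0$. Near $\underline{U}$ and for small $\tau\ge0$ these systems are strictly hyperbolic, with characteristic speeds $\lambda_1<\lambda_2$ and genuinely nonlinear fields. Let $r_k(U,\tau^2)$ be the right eigenvectors, normalized by $\nabla_U\lambda_k\cdot r_k=1$. Wave curves. For $k=1,2$, $\Phi_k(\alpha;U,\tau^2)$ denotes the $k$-th physically admissible wave curve through $U$: - it is the Lax shock curve for $\alpha<0$ and the rarefaction curve for $\alpha>0$; - it is $C^2$ in $(\alpha,U,\tau^2)$; - $\Phi_k(0;U,\tau^2)=U$ and $\partial_\alpha\Phi_k(0;U,\tau^2)=r_k(U,\tau^2)$. Write $\Phi_k(\alpha;U):=\Phi_k(\alpha;U,0)$ for the $\tau=0$ system. Compositions: - $\Phi(\alpha_1,\alpha_2;U,\tau^2)=\Phi_2(\alpha_2;\Phi_1(\alpha_1;U,\tau^2),\tau^2)$;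 - $\Phi(\beta_1,\beta_2;U)=\Phi_2(\beta_2;\Phi_1(\beta_1;U))$. *)

From Stdlib Require Import Reals.
From Coquelicot Require Import Coquelicot.
Open Scope R_scope.

(** States U = (rho, v). *)
Definition state : Type := (R * R)%type.

Definition Ubar : state := (1, 0).

Definition dist2 (U V : state) : R :=
  sqrt ((fst U - fst V) ^ 2 + (snd U - snd V) ^ 2).

Definition near_Ubar (eps : R) (U : state) : Prop := dist2 U Ubar < eps.

(** Velocity function u(rho, v; t), t = tau^2 (t > 0 formula, t = 0 limit). *)
Definition uvel (gam ainf : R) (U : state) (t : R) : R :=
  let rho := fst U in let v := snd U in
  if Rlt_dec 0 t then
    / t * (-1 + sqrt (1 - t * (v ^ 2
        + 2 * (Rpower rho (gam - 1) - 1) / ((gam - 1) * ainf ^ 2))))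
  else
    - / 2 * v ^ 2 - (Rpower rho (gam - 1) - 1) / ((gam - 1) * ainf ^ 2).

Definition Gfun (gam ainf : R) (U : state) (t : R) : state :=
  (fst U * (1 + t * uvel gam ainf U t), snd U).
Definition Ffun (gam ainf : R) (U : state) (t : R) : state :=
  (fst U * snd U, - uvel gam ainf U t).

Definition d_rho (f : state -> R) (U : state) : R :=
  Derive (fun x => f (x, snd U)) (fst U).
Definition d_v (f : state -> R) (U : state) : R :=
  Derive (fun y => f (fst U, y)) (snd U).
Definition ex_d_rho (f : state -> R) (U : state) : Prop :=
  ex_derive (fun x => f (x, snd U)) (fst U).
Definition ex_d_v (f : state -> R) (U : state) : Prop :=
  ex_derive (fun y => f (fst U, y)) (snd U).

(** (lam, r) is a characteristic pair of  dG U_x + dF U_y = 0  at (U,t):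
    dF(U,t) r = lam dG(U,t) r. *)
Definition char_pair (gam ainf : R) (lam : R) (r : state) (U : state) (t : R)
  : Prop :=
  let G1 := fun W => fst (Gfun gam ainf W t) in
  let G2 := fun W => snd (Gfun gam ainf W t) in
  let F1 := fun W => fst (Ffun gam ainf W t) in
  let F2 := fun W => snd (Ffun gam ainf W t) in
  d_rho F1 U * fst r + d_v F1 U * snd r
    = lam * (d_rho G1 U * fst r + d_v G1 U * snd r) /\
  d_rho F2 U * fst r + d_v F2 U * snd r
    = lam * (d_rho G2 U * fst r + d_v G2 U * snd r).

Definition in_box (delta : R) (U : state) : Prop :=
  Rabs (fst U - 1) < delta /\ Rabs (snd U) < delta.

Definition char_fields (gam ainf : R) (lam1 lam2 : state -> R -> R)
  (r1 r2 : state -> R -> state) : Prop :=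
  exists delta, 0 < delta /\
  forall U t, in_box delta U -> 0 <= t < delta ->
    lam1 U t < lam2 U t /\
    char_pair gam ainf (lam1 U t) (r1 U t) U t /\
    char_pair gam ainf (lam2 U t) (r2 U t) U t /\
    ex_d_rho (fun W => lam1 W t) U /\ ex_d_v (fun W => lam1 W t) U /\
    ex_d_rho (fun W => lam2 W t) U /\ ex_d_v (fun W => lam2 W t) U /\
    d_rho (fun W => lam1 W t) U * fst (r1 U t)
      + d_v (fun W => lam1 W t) U * snd (r1 U t) = 1 /\
    d_rho (fun W => lam2 W t) U * fst (r2 U t)
      + d_v (fun W => lam2 W t) U * snd (r2 U t) = 1.

(** C^2 regularity of functions of four real variables (alpha, rho, v, t):
    all partial derivatives up to order 2 exist and all of them (and the
    function) are jointly continuous. *)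
Definition pd (i : nat) (g : R -> R -> R -> R -> R) : R -> R -> R -> R -> R :=
  fun x1 x2 x3 x4 =>
  match i with
  | O => Derive (fun y => g y x2 x3 x4) x1
  | 1%nat => Derive (fun y => g x1 y x3 x4) x2
  | 2%nat => Derive (fun y => g x1 x2 y x4) x3
  | _ => Derive (fun y => g x1 x2 x3 y) x4
  end.
Definition ex_pd (i : nat) (g : R -> R -> R -> R -> R) (x1 x2 x3 x4 : R) : Prop :=
  match i with
  | O => ex_derive (fun y => g y x2 x3 x4) x1
  | 1%nat => ex_derive (fun y => g x1 y x3 x4) x2
  | 2%nat => ex_derive (fun y => g x1 x2 y x4) x3
  | _ => ex_derive (fun y => g x1 x2 x3 y) x4
  end.
Definition cont4 (g : R -> R -> R -> R -> R) (x1 x2 x3 x4 : R) : Prop :=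
  forall eps, 0 < eps -> exists d, 0 < d /\
  forall y1 y2 y3 y4, Rabs (y1 - x1) < d -> Rabs (y2 - x2) < d ->
    Rabs (y3 - x3) < d -> Rabs (y4 - x4) < d ->
    Rabs (g y1 y2 y3 y4 - g x1 x2 x3 x4) < eps.
Definition C2_at (g : R -> R -> R -> R -> R) (x1 x2 x3 x4 : R) : Prop :=
  cont4 g x1 x2 x3 x4 /\
  forall i, ex_pd i g x1 x2 x3 x4 /\ cont4 (pd i g) x1 x2 x3 x4 /\
  forall j, ex_pd j (pd i g) x1 x2 x3 x4 /\ cont4 (pd j (pd i g)) x1 x2 x3 x4.

Definition C2_family (Phi : R -> state -> R -> state) (delta : R) : Prop :=
  forall a rho v t, Rabs a < delta -> Rabs (rho - 1) < delta ->
    Rabs v < delta -> Rabs t < delta ->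
    C2_at (fun a' rho' v' t' => fst (Phi a' (rho', v') t')) a rho v t /\
    C2_at (fun a' rho' v' t' => snd (Phi a' (rho', v') t')) a rho v t.

Definition rankine_hugoniot (gam ainf : R) (s : R) (UL UR : state) (t : R)
  : Prop :=
  s * (fst (Gfun gam ainf UR t) - fst (Gfun gam ainf UL t))
    = fst (Ffun gam ainf UR t) - fst (Ffun gam ainf UL t) /\
  s * (snd (Gfun gam ainf UR t) - snd (Gfun gam ainf UL t))
    = snd (Ffun gam ainf UR t) - snd (Ffun gam ainf UL t).

Definition lax_shock (gam ainf : R) (k : nat) (lam1 lam2 : state -> R -> R)
  (UL UR : state) (t : R) : Prop :=
  exists s, rankine_hugoniot gam ainf s UL UR t /\
  match k with
  | 1%nat => lam1 UR t < s < lam1 UL t /\ s < lam2 UR t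
  | _ => lam2 UR t < s < lam2 UL t /\ lam1 UL t < s
  end.

Definition wave_curve (gam ainf : R) (k : nat) (lam1 lam2 : state -> R -> R)
  (rk : state -> R -> state) (Phik : R -> state -> R -> state) : Prop :=
  exists delta, 0 < delta /\
  C2_family Phik delta /\
  forall a U t, Rabs a < delta -> in_box delta U -> 0 <= t < delta ->
    Phik 0 U t = U /\
    ex_derive (fun b => fst (Phik b U t)) 0 /\
    ex_derive (fun b => snd (Phik b U t)) 0 /\
    Derive (fun b => fst (Phik b U t)) 0 = fst (rk U t) /\
    Derive (fun b => snd (Phik b U t)) 0 = snd (rk U t) /\
    (a < 0 -> lax_shock gam ainf k lam1 lam2 U (Phik a U t) t) /\
    (0 < a -> exists c, 0 < c /\
       Derive (fun b => fst (Phik b U t)) a = c * fst (rk (Phik a U t) t) /\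
       Derive (fun b => snd (Phik b U t)) a = c * snd (rk (Phik a U t) t)).

Definition Phi_comp (Phi1 Phi2 : R -> state -> R -> state)
  (a1 a2 : R) (U : state) (t : R) : state :=
  Phi2 a2 (Phi1 a1 U t) t.

From Stdlib Require Import Reals Lra Psatz.
From Coquelicot Require Import Coquelicot.
Open Scope R_scope.

(* Both wave-curve maps reduce to the identity at alpha = 0 for every t, so the
   t-dependence of Phi(alpha; U_L, t) only enters through mixed second differences
   in (alpha, t) and (alpha, U): this gives
   |Phi(alpha; U_L, tau^2) - Phi(alpha; U_L, 0)| = O((|alpha_1| + |alpha_2|) tau^2).
   At t = 0, Phi(beta; U_L) - Phi(alpha; U_L) is [r_1 r_2] (beta - alpha) up to small
   errors, and r_1, r_2 are independent since dG = I at t = 0 makes them eigenvectors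
   of dF for the distinct speeds lambda_1 < lambda_2; inverting this perturbed 2x2
   system bounds |beta - alpha| by |Phi(beta; U_L) - Phi(alpha; U_L)|, which is the
   first estimate in case (a) and at most |U_R - \hat U_R| plus it in case (b). *)

Lemma Derive_MVT (f : R -> R) a b :
  (forall x, Rmin a b <= x <= Rmax a b -> ex_derive f x) ->
  exists c, Rmin a b <= c <= Rmax a b /\ f b - f a = Derive f c * (b - a).
Proof.
  intros Hf.
  destruct (MVT_gen f a b (Derive f)) as [c [Hc Hfc]].
  - intros x Hx. apply Derive_correct, Hf. lra.
  - intros x Hx. apply continuity_pt_filterlim, (ex_derive_continuous f), Hf, Hx.
  - exists c. split; assumption.
Qed.

Lemma mixed_difference_le (phi : R -> R -> R) a b s t M :
  (forall x y, Rmin a b <= x <= Rmax a b -> Rmin s t <= y <= Rmax s t ->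
    ex_derive (fun x' => phi x' y) x /\
    ex_derive (fun y' => Derive (fun x' => phi x' y') x) y /\
    Rabs (Derive (fun y' => Derive (fun x' => phi x' y') x) y) <= M) ->
  Rabs (phi a t - phi a s - phi b t + phi b s) <= Rabs (a - b) * Rabs (t - s) * M.
Proof.
  intros Hphi.
  assert (Hs : Rmin s t <= s <= Rmax s t) by (split; [apply Rmin_l | apply Rmax_l]).
  assert (Ht : Rmin s t <= t <= Rmax s t) by (split; [apply Rmin_r | apply Rmax_r]).
  destruct (Derive_MVT (fun x => phi x t - phi x s) b a) as [xi [Hxi Exi]].
  { intros x Hx. rewrite Rmin_comm, Rmax_comm in Hx.
    apply (ex_derive_minus (fun x' => phi x' t) (fun x' => phi x' s)).
    - exact (proj1 (Hphi x t Hx Ht)).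
    - exact (proj1 (Hphi x s Hx Hs)). }
  rewrite Rmin_comm, Rmax_comm in Hxi.
  rewrite Derive_minus in Exi;
    [| exact (proj1 (Hphi xi t Hxi Ht)) | exact (proj1 (Hphi xi s Hxi Hs))].
  destruct (Derive_MVT (fun y => Derive (fun x' => phi x' y) xi) s t) as [eta [Heta Eeta]].
  { intros y Hy. exact (proj1 (proj2 (Hphi xi y Hxi Hy))). }
  cbv beta in Exi, Eeta. rewrite Eeta in Exi.
  replace (phi a t - phi a s - phi b t + phi b s)
    with (Derive (fun y => Derive (fun x' => phi x' y) xi) eta * (t - s) * (a - b)) by lra.
  rewrite !Rabs_mult, (Rmult_comm (Rabs _) (Rabs (t - s))), Rmult_comm, <- Rmult_assoc.
  apply Rmult_le_compat_l; [apply Rmult_le_pos; apply Rabs_pos |].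
  exact (proj2 (proj2 (Hphi xi eta Hxi Heta))).
Qed.

Lemma Rabs_between a b x c d :
  Rabs (a - c) < d -> Rabs (b - c) < d -> Rmin a b <= x <= Rmax a b -> Rabs (x - c) < d.
Proof.
  intros Ha Hb Hx. unfold Rmin, Rmax in Hx.
  apply Rabs_def2 in Ha. apply Rabs_def2 in Hb.
  apply Rabs_def1; destruct (Rle_dec a b); lra.
Qed.

Lemma Rabs_between0 a b x d :
  Rabs a < d -> Rabs b < d -> Rmin a b <= x <= Rmax a b -> Rabs x < d.
Proof.
  intros Ha Hb Hx. rewrite <- (Rminus_0_r x).
  apply (Rabs_between a b); try rewrite Rminus_0_r; assumption.
Qed.

Lemma Rabs_mult_perturb a b c e eta :
  Rabs (a - c) <= eta -> Rabs (b - e) <= eta -> eta <= 1 ->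
  Rabs (a * b - c * e) <= eta * (Rabs c + Rabs e + 1).
Proof.
  intros Hac Hbe Heta.
  assert (Hb : Rabs b <= Rabs e + 1).
  { replace b with ((b - e) + e) by ring. pose proof (Rabs_triang (b - e) e). lra. }
  replace (a * b - c * e) with ((a - c) * b + c * (b - e)) by ring.
  eapply Rle_trans; [apply Rabs_triang|]. rewrite !Rabs_mult.
  assert (Rabs (a - c) * Rabs b <= eta * (Rabs e + 1))
    by (apply Rmult_le_compat; [apply Rabs_pos | apply Rabs_pos | exact Hac | exact Hb]).
  assert (Rabs c * Rabs (b - e) <= Rabs c * eta)
    by (apply Rmult_le_compat_l; [apply Rabs_pos | exact Hbe]).
  lra.
Qed.

Lemma Rabs_cross_le c1 c2 X1 X2 :
  Rabs (c1 * X1 - c2 * X2) <= (Rabs c1 + Rabs c2) * (Rabs X1 + Rabs X2).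
Proof.
  unfold Rminus. eapply Rle_trans; [apply Rabs_triang|].
  rewrite Rabs_Ropp, !Rabs_mult.
  assert (0 <= Rabs c1 * Rabs X2) by (apply Rmult_le_pos; apply Rabs_pos).
  assert (0 <= Rabs c2 * Rabs X1) by (apply Rmult_le_pos; apply Rabs_pos).
  lra.
Qed.

Lemma Rabs_minus_le a b : Rabs (a - b) <= Rabs a + Rabs b.
Proof. unfold Rminus. rewrite <- (Rabs_Ropp b). apply Rabs_triang. Qed.

Lemma Rabs_det_perturb p q u w A1 A2 B1 B2 eta :
  Rabs (A1 - p) <= eta -> Rabs (A2 - q) <= eta ->
  Rabs (B1 - u) <= eta -> Rabs (B2 - w) <= eta -> eta <= 1 ->
  Rabs (p * w - q * u) - eta * (Rabs p + Rabs q + Rabs u + Rabs w + 2)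
    <= Rabs (A1 * B2 - A2 * B1).
Proof.
  intros HA1 HA2 HB1 HB2 Heta.
  pose proof (Rabs_mult_perturb A1 B2 p w eta HA1 HB2 Heta).
  pose proof (Rabs_mult_perturb A2 B1 q u eta HA2 HB1 Heta).
  pose proof (Rabs_triang_inv (p * w - q * u) (A1 * B2 - A2 * B1)) as Htri.
  rewrite (Rabs_minus_sym (p * w - q * u)) in Htri.
  replace (A1 * B2 - A2 * B1 - (p * w - q * u)) with ((A1 * B2 - p * w) - (A2 * B1 - q * u))
    in Htri by ring.
  pose proof (Rabs_minus_le (A1 * B2 - p * w) (A2 * B1 - q * u)). lra.
Qed.

Lemma perturbed_cramer_bound p q u w A1 A2 B1 B2 E1 E2 x y eta kappa S D :
  0 < D <= Rabs (p * w - q * u) ->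
  Rabs p + Rabs q + Rabs u + Rabs w + 1 <= S ->
  0 <= eta <= 1 -> 4 * S * eta <= D -> 16 * S * kappa <= D ->
  Rabs (A1 - p) <= eta -> Rabs (A2 - q) <= eta ->
  Rabs (B1 - u) <= eta -> Rabs (B2 - w) <= eta ->
  Rabs E1 <= kappa * Rabs x -> Rabs E2 <= kappa * Rabs x ->
  D * (Rabs x + Rabs y)
    <= 16 * S * (Rabs (A1 * x + B1 * y + E1) + Rabs (A2 * x + B2 * y + E2)).
Proof.
  intros [HD HDdet] HS [Heta0 Heta1] Heta Hkappa HA1 HA2 HB1 HB2 HE1 HE2.
  set (Z1 := A1 * x + B1 * y + E1). set (Z2 := A2 * x + B2 * y + E2).
  set (Z := Rabs Z1 + Rabs Z2).
  set (det := A1 * B2 - A2 * B1).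
  pose proof (Rabs_pos p). pose proof (Rabs_pos q).
  pose proof (Rabs_pos u). pose proof (Rabs_pos w).
  pose proof (Rabs_pos x). pose proof (Rabs_pos y).
  assert (Hdet : D / 2 <= Rabs det).
  { pose proof (Rabs_det_perturb p q u w A1 A2 B1 B2 eta HA1 HA2 HB1 HB2 Heta1).
    assert (eta * (Rabs p + Rabs q + Rabs u + Rabs w + 2) <= eta * (2 * S))
      by (apply Rmult_le_compat_l; lra).
    unfold det. lra. }
  assert (HE : Rabs (Z1 - E1) + Rabs (Z2 - E2) <= Z + 2 * kappa * Rabs x).
  { pose proof (Rabs_minus_le Z1 E1). pose proof (Rabs_minus_le Z2 E2). unfold Z. lra. }
  assert (HEZ : 0 <= Rabs (Z1 - E1) + Rabs (Z2 - E2))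
    by (pose proof (Rabs_pos (Z1 - E1)); pose proof (Rabs_pos (Z2 - E2)); lra).
  assert (Hx : Rabs x * Rabs det <= 2 * S * (Z + 2 * kappa * Rabs x)).
  { rewrite <- Rabs_mult.
    replace (x * det) with (B2 * (Z1 - E1) - B1 * (Z2 - E2)) by (unfold Z1, Z2, det; ring).
    eapply Rle_trans; [apply Rabs_cross_le|].
    pose proof (Rabs_triang_inv B1 u). pose proof (Rabs_triang_inv B2 w).
    apply Rmult_le_compat; [pose proof (Rabs_pos B1); pose proof (Rabs_pos B2); lra|lra|lra|lra]. }
  assert (Hy : Rabs y * Rabs det <= 2 * S * (Z + 2 * kappa * Rabs x)).
  { rewrite <- Rabs_mult.
    replace (y * det) with (A1 * (Z2 - E2) - A2 * (Z1 - E1)) by (unfold Z1, Z2, det; ring).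
    eapply Rle_trans; [apply Rabs_cross_le|].
    pose proof (Rabs_triang_inv A1 p). pose proof (Rabs_triang_inv A2 q).
    rewrite (Rplus_comm (Rabs (Z2 - E2))).
    apply Rmult_le_compat; [pose proof (Rabs_pos A1); pose proof (Rabs_pos A2); lra|lra|lra|lra]. }
  assert (Hk : 4 * S * kappa * Rabs x <= D / 4 * Rabs x) by (apply Rmult_le_compat_r; lra).
  assert (Rabs x * (D / 2) <= Rabs x * Rabs det) by (apply Rmult_le_compat_l; lra).
  assert (Rabs y * (D / 2) <= Rabs y * Rabs det) by (apply Rmult_le_compat_l; lra).
  lra.
Qed.

Definition det2 (U V : state) : R := fst U * snd V - snd U * fst V.

(* A vanishing determinant makes [(u, w)] a multiple of [(p, q)], hence an
   eigenvector for both [l1] and [l2]. *)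
Lemma eigenvectors_independent a11 a12 a21 a22 l1 l2 p q u w c1 c2 e1 e2 :
  l1 <> l2 ->
  a11 * p + a12 * q = l1 * p -> a21 * p + a22 * q = l1 * q ->
  a11 * u + a12 * w = l2 * u -> a21 * u + a22 * w = l2 * w ->
  c1 * p + c2 * q = 1 -> e1 * u + e2 * w = 1 ->
  p * w - q * u <> 0.
Proof.
  intros Hl H1p H1q H2u H2w Hc He Hdet.
  assert (Hqu : q * u = p * w) by lra.
  set (s := c1 * u + c2 * w).
  assert (Hu : u = s * p).
  { transitivity (c1 * (p * u) + c2 * (q * u)).
    - rewrite <- (Rmult_1_r u) at 1. rewrite <- Hc. ring.
    - rewrite Hqu. unfold s. ring. }
  assert (Hw : w = s * q).
  { transitivity (c1 * (p * w) + c2 * (q * w)).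
    - rewrite <- (Rmult_1_r w) at 1. rewrite <- Hc. ring.
    - rewrite <- Hqu. unfold s. ring. }
  assert (Eu : l2 * u = l1 * u).
  { rewrite <- H2u, Hu, Hw.
    replace (a11 * (s * p) + a12 * (s * q)) with (s * (a11 * p + a12 * q)) by ring.
    rewrite H1p. ring. }
  assert (Ew : l2 * w = l1 * w).
  { rewrite <- H2w, Hu, Hw.
    replace (a21 * (s * p) + a22 * (s * q)) with (s * (a21 * p + a22 * q)) by ring.
    rewrite H1q. ring. }
  apply Hl.
  rewrite <- (Rmult_1_r l1), <- (Rmult_1_r l2), <- He.
  replace (l1 * (e1 * u + e2 * w)) with (e1 * (l1 * u) + e2 * (l1 * w)) by ring.
  rewrite <- Eu, <- Ew. ring.
Qed.

Lemma Gfun_t0 gam ainf U : Gfun gam ainf U 0 = U.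
Proof. destruct U as [rho v]. unfold Gfun. simpl. f_equal. ring. Qed.

Lemma char_pair_t0 gam ainf lam r U :
  char_pair gam ainf lam r U 0 ->
  d_rho (fun W => fst (Ffun gam ainf W 0)) U * fst r
    + d_v (fun W => fst (Ffun gam ainf W 0)) U * snd r = lam * fst r /\
  d_rho (fun W => snd (Ffun gam ainf W 0)) U * fst r
    + d_v (fun W => snd (Ffun gam ainf W 0)) U * snd r = lam * snd r.
Proof.
  unfold char_pair. cbv zeta.
  assert (Hid : forall W, Gfun gam ainf W 0 = W) by apply Gfun_t0.
  unfold d_rho, d_v. rewrite !(Derive_ext _ _ _ (fun x => f_equal _ (Hid _))). simpl.
  rewrite Derive_id, !Derive_const, Derive_id.
  intros [E1 E2]. split; [rewrite E1 | rewrite E2]; ring.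
Qed.

Lemma Ubar_in_box d : 0 < d -> in_box d Ubar.
Proof. intros Hd. unfold in_box, Ubar. simpl. rewrite Rminus_diag, Rabs_R0. lra. Qed.

Lemma char_fields_det gam ainf lam1 lam2 r1 r2 :
  char_fields gam ainf lam1 lam2 r1 r2 -> det2 (r1 Ubar 0) (r2 Ubar 0) <> 0.
Proof.
  intros [delta [Hdelta Hcf]].
  destruct (Hcf Ubar 0) as [Hl [C1 [C2 [_ [_ [_ [_ [N1 N2]]]]]]]].
  - exact (Ubar_in_box _ Hdelta).
  - lra.
  - apply char_pair_t0 in C1 as [C1p C1q]. apply char_pair_t0 in C2 as [C2u C2w].
    unfold det2. eapply eigenvectors_independent;
      [apply Rlt_not_eq, Hl | exact C1p | exact C1q | exact C2u | exact C2w | exact N1 | exact N2].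
Qed.

Definition around_base (d : R) (P : R -> R -> R -> R -> Prop) : Prop :=
  forall a rho v t, Rabs a < d -> Rabs (rho - 1) < d -> Rabs v < d -> Rabs t < d ->
    P a rho v t.

Definition near_base (P : R -> R -> R -> R -> Prop) : Prop :=
  exists d, 0 < d /\ around_base d P.

Lemma around_base_le d d' P : d' <= d -> around_base d P -> around_base d' P.
Proof. intros Hd HP a rho v t Ha Hrho Hv Ht. apply HP; lra. Qed.

Lemma around_base_at d P : 0 < d -> around_base d P -> P 0 1 0 0.
Proof.
  intros Hd HP. apply HP; rewrite ?Rminus_diag, Rabs_R0; exact Hd.
Qed.

Lemma near_base_impl (P Q : R -> R -> R -> R -> Prop) :
  (forall a rho v t, P a rho v t -> Q a rho v t) -> near_base P -> near_base Q.
Proof.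
  intros HPQ [d [Hd HP]]. exists d. split; [exact Hd|].
  intros a rho v t Ha Hrho Hv Ht. apply HPQ, HP; assumption.
Qed.

Lemma near_base_and (P Q : R -> R -> R -> R -> Prop) :
  near_base P -> near_base Q -> near_base (fun a rho v t => P a rho v t /\ Q a rho v t).
Proof.
  intros [d [Hd HP]] [d' [Hd' HQ]]. exists (Rmin d d'). split; [apply Rmin_pos; assumption|].
  pose proof (Rmin_l d d'). pose proof (Rmin_r d d').
  intros a rho v t Ha Hrho Hv Ht. split; [apply HP | apply HQ]; lra.
Qed.

Lemma near_base_cont h eps :
  cont4 h 0 1 0 0 -> 0 < eps ->
  near_base (fun a rho v t => Rabs (h a rho v t - h 0 1 0 0) < eps).
Proof.
  intros Hh Heps. destruct (Hh eps Heps) as [d [Hd Hball]].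
  exists d. split; [exact Hd|].
  intros a rho v t Ha Hrho Hv Ht. apply Hball; rewrite ?Rminus_0_r; assumption.
Qed.

Lemma near_base_bounded h :
  cont4 h 0 1 0 0 -> exists M, 0 <= M /\ near_base (fun a rho v t => Rabs (h a rho v t) <= M).
Proof.
  intros Hh. exists (Rabs (h 0 1 0 0) + 1). split; [pose proof (Rabs_pos (h 0 1 0 0)); lra|].
  apply (near_base_impl (fun a rho v t => Rabs (h a rho v t - h 0 1 0 0) < 1)).
  - intros a rho v t H. pose proof (Rabs_triang_inv (h a rho v t) (h 0 1 0 0)). lra.
  - apply near_base_cont; [exact Hh | lra].
Qed.

Definition C2_estimates (g : R -> R -> R -> R -> R) (c eta M : R) (a rho v t : R) : Prop :=
  C2_at g a rho v t /\ Rabs (pd 0 g a rho v t - c) < eta /\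
  Rabs (pd 1 (pd 0 g) a rho v t) <= M /\ Rabs (pd 2 (pd 0 g) a rho v t) <= M /\
  Rabs (pd 3 (pd 0 g) a rho v t) <= M.

Lemma C2_estimates_near_base g eta :
  near_base (C2_at g) -> 0 < eta ->
  exists M, 0 <= M /\ near_base (C2_estimates g (pd 0 g 0 1 0 0) eta M).
Proof.
  intros HC Heta.
  assert (Hg : C2_at g 0 1 0 0) by (destruct HC as [d [Hd HC]]; exact (around_base_at d _ Hd HC)).
  destruct Hg as [_ Hg].
  destruct (Hg 0%nat) as [_ [Hslope Hsecond]].
  destruct (near_base_bounded _ (proj2 (Hsecond 1%nat))) as [M1 [HM1 N1]].
  destruct (near_base_bounded _ (proj2 (Hsecond 2%nat))) as [M2 [HM2 N2]].
  destruct (near_base_bounded _ (proj2 (Hsecond 3%nat))) as [M3 [HM3 N3]].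
  exists (M1 + M2 + M3). split; [lra|].
  pose proof (near_base_and _ _ N2 N3) as N23.
  pose proof (near_base_and _ _ N1 N23) as N123.
  pose proof (near_base_and _ _ (near_base_cont _ _ Hslope Heta) N123) as N.
  pose proof (near_base_and _ _ HC N) as N'.
  revert N'. apply near_base_impl.
  intros a rho v t [H0 [H1 [H2 [H3 H4]]]].
  refine (conj H0 (conj H1 _)). repeat split; lra.
Qed.

Lemma C2_estimates_ex_pd g c eta M a rho v t i :
  C2_estimates g c eta M a rho v t -> ex_pd i g a rho v t.
Proof. intros [[_ Hg] _]. exact (proj1 (Hg i)). Qed.

Lemma C2_estimates_ex_pd2 g c eta M a rho v t i :
  C2_estimates g c eta M a rho v t -> ex_pd i (pd 0 g) a rho v t.
Proof. intros [[_ Hg] _]. exact (proj1 (proj2 (proj2 (Hg 0%nat)) i)). Qed.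

Section C2Estimates.

Variables (g : R -> R -> R -> R -> R) (c eta M d : R).
Hypothesis Hg : around_base d (C2_estimates g c eta M).

Lemma mixed_difference_alpha_t a rho v t :
  Rabs a < d -> Rabs (rho - 1) < d -> Rabs v < d -> 0 <= t < d ->
  Rabs (g a rho v t - g a rho v 0 - g 0 rho v t + g 0 rho v 0) <= Rabs a * t * M.
Proof.
  intros Ha Hrho Hv Ht.
  assert (H0 : Rabs 0 < d) by (rewrite Rabs_R0; lra).
  assert (Ht' : Rabs t < d) by (rewrite Rabs_pos_eq; lra).
  pose proof (mixed_difference_le (fun a' t' => g a' rho v t') a 0 0 t M) as Hmixed.
  cbv beta in Hmixed. rewrite !Rminus_0_r, (Rabs_pos_eq t) in Hmixed by lra.
  apply Hmixed. intros a' t' Ha' Ht''.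
  pose proof (Hg a' rho v t' (Rabs_between0 _ _ _ _ Ha H0 Ha') Hrho Hv
                (Rabs_between0 _ _ _ _ H0 Ht' Ht'')) as Hest.
  split; [exact (C2_estimates_ex_pd _ _ _ _ _ _ _ _ 0 Hest)|].
  split; [exact (C2_estimates_ex_pd2 _ _ _ _ _ _ _ _ 3 Hest)|].
  apply Hest.
Qed.

Lemma mixed_difference_alpha_state a rho v rho' v' t :
  Rabs a < d -> Rabs (rho - 1) < d -> Rabs v < d -> Rabs (rho' - 1) < d -> Rabs v' < d ->
  Rabs t < d ->
  Rabs ((g a rho v t - g a rho' v' t) - (g 0 rho v t - g 0 rho' v' t))
    <= Rabs a * M * (Rabs (rho - rho') + Rabs (v - v')).
Proof.
  intros Ha Hrho Hv Hrho' Hv' Ht.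
  assert (H0 : Rabs 0 < d) by (rewrite Rabs_R0; pose proof (Rabs_pos a); lra).
  assert (Hrho_part : Rabs (g a rho v t - g a rho' v t - g 0 rho v t + g 0 rho' v t)
                      <= Rabs a * Rabs (rho - rho') * M).
  { pose proof (mixed_difference_le (fun a' r' => g a' r' v t) a 0 rho' rho M) as Hmixed.
    cbv beta in Hmixed. rewrite Rminus_0_r in Hmixed.
    apply Hmixed. intros a' r' Ha' Hr'.
    pose proof (Hg a' r' v t (Rabs_between0 _ _ _ _ Ha H0 Ha')
                  (Rabs_between _ _ _ _ _ Hrho' Hrho Hr') Hv Ht) as Hest.
    split; [exact (C2_estimates_ex_pd _ _ _ _ _ _ _ _ 0 Hest)|].
    split; [exact (C2_estimates_ex_pd2 _ _ _ _ _ _ _ _ 1 Hest)|].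
    apply Hest. }
  assert (Hv_part : Rabs (g a rho' v t - g a rho' v' t - g 0 rho' v t + g 0 rho' v' t)
                    <= Rabs a * Rabs (v - v') * M).
  { pose proof (mixed_difference_le (fun a' v'' => g a' rho' v'' t) a 0 v' v M) as Hmixed.
    cbv beta in Hmixed. rewrite Rminus_0_r in Hmixed.
    apply Hmixed. intros a' v'' Ha' Hv''.
    pose proof (Hg a' rho' v'' t (Rabs_between0 _ _ _ _ Ha H0 Ha') Hrho'
                  (Rabs_between0 _ _ _ _ Hv' Hv Hv'') Ht) as Hest.
    split; [exact (C2_estimates_ex_pd _ _ _ _ _ _ _ _ 0 Hest)|].
    split; [exact (C2_estimates_ex_pd2 _ _ _ _ _ _ _ _ 2 Hest)|].
    apply Hest. }
  replace ((g a rho v t - g a rho' v' t) - (g 0 rho v t - g 0 rho' v' t))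
    with ((g a rho v t - g a rho' v t - g 0 rho v t + g 0 rho' v t)
          + (g a rho' v t - g a rho' v' t - g 0 rho' v t + g 0 rho' v' t)) by ring.
  eapply Rle_trans; [apply Rabs_triang|]. lra.
Qed.

Lemma mean_value_alpha a b rho v t :
  Rabs a < d -> Rabs b < d -> Rabs (rho - 1) < d -> Rabs v < d -> Rabs t < d ->
  exists A, Rabs (A - c) < eta /\ g b rho v t - g a rho v t = A * (b - a).
Proof.
  intros Ha Hb Hrho Hv Ht.
  destruct (Derive_MVT (fun a => g a rho v t) a b) as [xi [Hxi Exi]].
  { intros a' Ha'.
    exact (C2_estimates_ex_pd _ _ _ _ _ _ _ _ 0
             (Hg a' rho v t (Rabs_between0 _ _ _ _ Ha Hb Ha') Hrho Hv Ht)). }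
  exists (Derive (fun a => g a rho v t) xi). split; [|exact Exi].
  exact (proj1 (proj2 (Hg xi rho v t (Rabs_between0 _ _ _ _ Ha Hb Hxi) Hrho Hv Ht))).
Qed.

Lemma increment_alpha a b rho v rho' v' t :
  Rabs a < d -> Rabs b < d -> Rabs (rho - 1) < d -> Rabs v < d ->
  Rabs (rho' - 1) < d -> Rabs v' < d -> Rabs t < d ->
  exists A, Rabs (A - c) < eta /\
    Rabs ((g b rho' v' t - g a rho v t) - A * (b - a) - (g 0 rho' v' t - g 0 rho v t))
      <= Rabs a * M * (Rabs (rho' - rho) + Rabs (v' - v)).
Proof.
  intros Ha Hb Hrho Hv Hrho' Hv' Ht.
  destruct (mean_value_alpha a b rho' v' t Ha Hb Hrho' Hv' Ht) as [A [HA EA]].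
  exists A. split; [exact HA|].
  replace ((g b rho' v' t - g a rho v t) - A * (b - a) - (g 0 rho' v' t - g 0 rho v t))
    with ((g a rho' v' t - g a rho v t) - (g 0 rho' v' t - g 0 rho v t)) by lra.
  apply mixed_difference_alpha_state; assumption.
Qed.

End C2Estimates.

Definition dist1 (U V : state) : R := Rabs (fst U - fst V) + Rabs (snd U - snd V).

Lemma dist1_triangle U V W : dist1 U W <= dist1 U V + dist1 V W.
Proof.
  unfold dist1.
  pose proof (Rabs_triang (fst U - fst V) (fst V - fst W)).
  pose proof (Rabs_triang (snd U - snd V) (snd V - snd W)).
  replace (fst U - fst V + (fst V - fst W)) with (fst U - fst W) in * by ring.
  replace (snd U - snd V + (snd V - snd W)) with (snd U - snd W) in * by ring.
  lra.
Qed.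

Lemma dist1_nonneg U V : 0 <= dist1 U V.
Proof.
  unfold dist1. pose proof (Rabs_pos (fst U - fst V)). pose proof (Rabs_pos (snd U - snd V)).
  lra.
Qed.

Lemma dist1_refl U : dist1 U U = 0.
Proof. unfold dist1. rewrite !Rminus_diag, Rabs_R0. ring. Qed.

Lemma dist1_le_dist2 U V : dist1 U V <= 2 * dist2 U V.
Proof.
  unfold dist1, dist2.
  assert (Hsq : forall a b, Rabs a <= sqrt (a ^ 2 + b ^ 2)).
  { intros a b. rewrite <- sqrt_Rsqr_abs. apply sqrt_le_1_alt.
    unfold Rsqr. pose proof (pow2_ge_0 b). lra. }
  pose proof (Hsq (fst U - fst V) (snd U - snd V)).
  pose proof (Hsq (snd U - snd V) (fst U - fst V)).
  rewrite Rplus_comm in H0. lra.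
Qed.

Lemma near_Ubar_in_box eps U : near_Ubar eps U -> in_box eps U.
Proof.
  unfold near_Ubar, dist2, in_box, Ubar. simpl. rewrite <- (Rminus_0_r (snd U)) at 2.
  intros H. split; eapply Rle_lt_trans; try exact H;
    rewrite <- sqrt_Rsqr_abs; apply sqrt_le_1_alt; unfold Rsqr;
    [pose proof (pow2_ge_0 (snd U - 0)) | pose proof (pow2_ge_0 (fst U - 1))]; lra.
Qed.

Lemma in_box_le d d' U : d <= d' -> in_box d U -> in_box d' U.
Proof. unfold in_box. lra. Qed.

Definition fst4 (Phi : R -> state -> R -> state) : R -> R -> R -> R -> R :=
  fun a rho v t => fst (Phi a (rho, v) t).
Definition snd4 (Phi : R -> state -> R -> state) : R -> R -> R -> R -> R :=
  fun a rho v t => snd (Phi a (rho, v) t).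

Definition wave_estimates (Phi : R -> state -> R -> state) (P : state) (eta M : R)
  (a rho v t : R) : Prop :=
  C2_estimates (fst4 Phi) (fst P) eta M a rho v t /\
  C2_estimates (snd4 Phi) (snd P) eta M a rho v t.

Lemma wave_curve_estimates gam ainf k lam1 lam2 rk Phik eta :
  wave_curve gam ainf k lam1 lam2 rk Phik -> 0 < eta ->
  exists M d, 0 <= M /\ 0 < d /\ around_base d (wave_estimates Phik (rk Ubar 0) eta M) /\
    (forall U t, in_box d U -> 0 <= t < d -> Phik 0 U t = U).
Proof.
  intros [delta [Hdelta [HC2 Hw]]] Heta.
  pose proof (Ubar_in_box _ Hdelta) as Hbase.
  destruct (Hw 0 Ubar 0) as [_ [_ [_ [Er1 [Er2 _]]]]]; [rewrite Rabs_R0; lra | exact Hbase | lra |].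
  destruct (C2_estimates_near_base (fst4 Phik) eta) as [M1 [HM1 N1]];
    [exists delta; split; [exact Hdelta | intros ? ? ? ? ? ? ? ?; apply HC2; assumption] | exact Heta |].
  destruct (C2_estimates_near_base (snd4 Phik) eta) as [M2 [HM2 N2]];
    [exists delta; split; [exact Hdelta | intros ? ? ? ? ? ? ? ?; apply HC2; assumption] | exact Heta |].
  destruct (near_base_and _ _ N1 N2) as [d [Hd N]].
  exists (M1 + M2), (Rmin d delta). split; [lra|]. split; [apply Rmin_pos; assumption|].
  pose proof (Rmin_l d delta). pose proof (Rmin_r d delta).
  split.
  - intros a rho v t Ha Hrho Hv Ht.
    destruct (N a rho v t) as [[C1 [S1 B1]] [C2 [S2 B2]]]; try lra.
    change (pd 0 (fst4 Phik) 0 1 0 0) with (Derive (fun b => fst (Phik b Ubar 0)) 0) in S1.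
    change (pd 0 (snd4 Phik) 0 1 0 0) with (Derive (fun b => snd (Phik b Ubar 0)) 0) in S2.
    rewrite Er1 in S1. rewrite Er2 in S2.
    split; (split; [assumption | split; [assumption | repeat split; lra]]).
  - intros U t HU Ht.
    destruct (Hw 0 U t) as [E0 _]; [rewrite Rabs_R0; lra | | lra | exact E0].
    apply (in_box_le (Rmin d delta)); assumption.
Qed.

Lemma wave_curve_in_box gam ainf k lam1 lam2 rk Phik rho :
  wave_curve gam ainf k lam1 lam2 rk Phik -> 0 < rho ->
  near_base (fun a r v t => in_box rho (Phik a (r, v) t)).
Proof.
  intros [delta [Hdelta [HC2 Hw]]] Hrho.
  pose proof (Ubar_in_box _ Hdelta) as Hbase.
  destruct (Hw 0 Ubar 0) as [E0 _]; [rewrite Rabs_R0; lra | exact Hbase | lra |].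
  assert (HC : C2_at (fst4 Phik) 0 1 0 0 /\ C2_at (snd4 Phik) 0 1 0 0)
    by (apply HC2; rewrite ?Rminus_diag, Rabs_R0; exact Hdelta).
  destruct HC as [[Cr _] [Cv _]].
  generalize (near_base_and _ _ (near_base_cont _ _ Cr Hrho) (near_base_cont _ _ Cv Hrho)).
  apply near_base_impl.
  intros a r v t. unfold fst4, snd4, in_box. unfold Ubar in E0. rewrite E0. simpl.
  rewrite Rminus_0_r. tauto.
Qed.

Section WaveFamily.

Variables (Phi : R -> state -> R -> state) (P : state) (eta M d : R).
Hypothesis Hest : around_base d (wave_estimates Phi P eta M).
Hypothesis Hid : forall U t, in_box d U -> 0 <= t < d -> Phi 0 U t = U.

Let Hest_fst : around_base d (C2_estimates (fst4 Phi) (fst P) eta M).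
Proof. intros a rho v t Ha Hrho Hv Ht. exact (proj1 (Hest a rho v t Ha Hrho Hv Ht)). Qed.

Let Hest_snd : around_base d (C2_estimates (snd4 Phi) (snd P) eta M).
Proof. intros a rho v t Ha Hrho Hv Ht. exact (proj2 (Hest a rho v t Ha Hrho Hv Ht)). Qed.

Lemma wave_tau_lipschitz a U t :
  Rabs a < d -> in_box d U -> 0 <= t < d -> dist1 (Phi a U t) (Phi a U 0) <= 2 * M * Rabs a * t.
Proof.
  intros Ha HU Ht. destruct U as [rho v]. pose proof HU as [Hrho Hv]. simpl in Hrho, Hv.
  assert (Hd : 0 <= 0 < d) by lra.
  pose proof (mixed_difference_alpha_t _ _ _ _ _ Hest_fst a rho v t Ha Hrho Hv Ht) as Hfst.
  pose proof (mixed_difference_alpha_t _ _ _ _ _ Hest_snd a rho v t Ha Hrho Hv Ht) as Hsnd.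
  unfold fst4, snd4 in Hfst, Hsnd. rewrite !Hid in Hfst, Hsnd by assumption. simpl in Hfst, Hsnd.
  unfold dist1.
  replace (fst (Phi a (rho, v) t) - fst (Phi a (rho, v) 0) - rho + rho)
    with (fst (Phi a (rho, v) t) - fst (Phi a (rho, v) 0)) in Hfst by ring.
  replace (snd (Phi a (rho, v) t) - snd (Phi a (rho, v) 0) - v + v)
    with (snd (Phi a (rho, v) t) - snd (Phi a (rho, v) 0)) in Hsnd by ring.
  lra.
Qed.

Lemma wave_increment a b U V :
  Rabs a < d -> Rabs b < d -> in_box d U -> in_box d V ->
  exists B, Rabs (fst B - fst P) < eta /\ Rabs (snd B - snd P) < eta /\
    Rabs (fst (Phi b V 0) - fst (Phi a U 0) - fst B * (b - a) - (fst V - fst U))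
      <= Rabs a * M * dist1 V U /\
    Rabs (snd (Phi b V 0) - snd (Phi a U 0) - snd B * (b - a) - (snd V - snd U))
      <= Rabs a * M * dist1 V U.
Proof.
  intros Ha Hb HU HV. destruct U as [rho v], V as [rho' v'].
  destruct HU as [Hrho Hv], HV as [Hrho' Hv']. simpl in *.
  assert (H0 : Rabs 0 < d) by (rewrite Rabs_R0; pose proof (Rabs_pos a); lra).
  assert (Hd : 0 <= 0 < d) by (rewrite Rabs_R0 in H0; lra).
  destruct (increment_alpha _ _ _ _ _ Hest_fst a b rho v rho' v' 0) as [B1 [HB1 E1]];
    try assumption.
  destruct (increment_alpha _ _ _ _ _ Hest_snd a b rho v rho' v' 0) as [B2 [HB2 E2]];
    try assumption.
  exists (B1, B2). unfold fst4, snd4, dist1 in *. simpl.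
  rewrite !Hid in E1, E2 by first [exact Hd | split; simpl; assumption]. simpl in E1, E2.
  repeat split; assumption.
Qed.

Lemma wave_base_lipschitz a U V :
  Rabs a < d -> in_box d U -> in_box d V ->
  dist1 (Phi a V 0) (Phi a U 0) <= (1 + 2 * M * Rabs a) * dist1 V U.
Proof.
  intros Ha HU HV.
  destruct (wave_increment a a U V Ha Ha HU HV) as [B [_ [_ [E1 E2]]]].
  rewrite Rminus_diag, Rmult_0_r, Rminus_0_r in E1, E2.
  pose proof (Rabs_triang_inv (fst (Phi a V 0) - fst (Phi a U 0)) (fst V - fst U)).
  pose proof (Rabs_triang_inv (snd (Phi a V 0) - snd (Phi a U 0)) (snd V - snd U)).
  unfold dist1 in *. lra.
Qed.

Lemma wave_slope a b U :
  Rabs a < d -> Rabs b < d -> in_box d U ->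
  exists A, Rabs (fst A - fst P) < eta /\ Rabs (snd A - snd P) < eta /\
    fst (Phi b U 0) - fst (Phi a U 0) = fst A * (b - a) /\
    snd (Phi b U 0) - snd (Phi a U 0) = snd A * (b - a).
Proof.
  intros Ha Hb HU.
  destruct (wave_increment a b U U Ha Hb HU HU) as [A [HA1 [HA2 [E1 E2]]]].
  exists A. split; [exact HA1|]. split; [exact HA2|].
  unfold dist1 in E1, E2. rewrite !Rminus_diag, Rabs_R0, !Rplus_0_r, Rmult_0_r, Rminus_0_r in E1, E2.
  split; apply Rminus_diag_uniq, Rabs_eq_0, Rle_antisym; try apply Rabs_pos; assumption.
Qed.

End WaveFamily.

Section CompositeWave.

Variables (Phi1 Phi2 : R -> state -> R -> state) (P Q : state) (eta M1 M2 d d' : R).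
Hypothesis Hdd' : d <= d'.
Hypothesis HM1 : 0 <= M1.
Hypothesis HM2 : 0 <= M2.
Hypothesis Hest1 : around_base d (wave_estimates Phi1 P eta M1).
Hypothesis Hest2 : around_base d' (wave_estimates Phi2 Q eta M2).
Hypothesis Hid1 : forall U t, in_box d U -> 0 <= t < d -> Phi1 0 U t = U.
Hypothesis Hid2 : forall U t, in_box d' U -> 0 <= t < d' -> Phi2 0 U t = U.
Hypothesis Hbox1 : around_base d (fun a rho v t => in_box d' (Phi1 a (rho, v) t)).

Let Phi1_in_box a U t : Rabs a < d -> in_box d U -> 0 <= t < d -> in_box d' (Phi1 a U t).
Proof.
  intros Ha [Hrho Hv] Ht. destruct U as [rho v].
  apply Hbox1; try assumption. rewrite Rabs_pos_eq; lra.
Qed.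

Lemma composite_tau_lipschitz UL a1 a2 t :
  in_box d UL -> Rabs a1 < d -> Rabs a2 < d -> 0 <= t < d ->
  dist1 (Phi_comp Phi1 Phi2 a1 a2 UL t) (Phi_comp Phi1 Phi2 a1 a2 UL 0)
    <= 2 * (M1 + M2) * (1 + 2 * M2 * d') * (Rabs a1 + Rabs a2) * t.
Proof.
  intros HUL Ha1 Ha2 Ht. unfold Phi_comp.
  assert (H0 : 0 <= 0 < d) by lra.
  set (Vt := Phi1 a1 UL t). set (V0 := Phi1 a1 UL 0).
  assert (HVt : in_box d' Vt) by (apply Phi1_in_box; assumption).
  assert (HV0 : in_box d' V0) by (apply Phi1_in_box; assumption).
  assert (Ha2' : Rabs a2 < d') by lra.
  pose proof (wave_tau_lipschitz _ _ _ _ _ Hest1 Hid1 a1 UL t Ha1 HUL Ht) as Htau1.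
  pose proof (wave_tau_lipschitz _ _ _ _ _ Hest2 Hid2 a2 Vt t Ha2' HVt ltac:(lra)) as Htau2.
  pose proof (wave_base_lipschitz _ _ _ _ _ Hest2 Hid2 a2 V0 Vt Ha2' HV0 HVt) as Hbase.
  fold Vt V0 in Htau1.
  pose proof (dist1_triangle (Phi2 a2 Vt t) (Phi2 a2 Vt 0) (Phi2 a2 V0 0)) as Htri.
  pose proof (Rabs_pos a1). pose proof (Rabs_pos a2).
  assert (Hfactor : (1 + 2 * M2 * Rabs a2) * dist1 Vt V0
                    <= (1 + 2 * M2 * d') * (2 * M1 * Rabs a1 * t)).
  { apply Rmult_le_compat; [nra | apply dist1_nonneg | nra | exact Htau1]. }
  assert (Hd' : 0 <= 1 + 2 * M2 * d') by nra.
  assert (0 <= M2 * Rabs a2 * t * (2 * M2 * d')) by (repeat apply Rmult_le_pos; lra).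
  assert (0 <= M1 * Rabs a2 * t * (1 + 2 * M2 * d')) by (repeat apply Rmult_le_pos; lra).
  assert (0 <= M2 * Rabs a1 * t * (1 + 2 * M2 * d')) by (repeat apply Rmult_le_pos; lra).
  lra.
Qed.

Lemma composite_inverse_lipschitz UL a1 a2 b1 b2 S D :
  0 < D <= Rabs (det2 P Q) ->
  Rabs (fst P) + Rabs (snd P) + Rabs (fst Q) + Rabs (snd Q) + 1 <= S ->
  eta <= 1 -> 4 * S * eta <= D -> 32 * S * S * M2 * d <= D ->
  in_box d UL -> Rabs a1 < d -> Rabs a2 < d -> Rabs b1 < d -> Rabs b2 < d ->
  D * (Rabs (b1 - a1) + Rabs (b2 - a2))
    <= 16 * S * dist1 (Phi_comp Phi1 Phi2 b1 b2 UL 0) (Phi_comp Phi1 Phi2 a1 a2 UL 0).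
Proof.
  intros HD HS Heta1 Heta HM2d HUL Ha1 Ha2 Hb1 Hb2. unfold Phi_comp.
  assert (H0 : 0 <= 0 < d) by (pose proof (Rabs_pos a1); lra).
  set (Wa := Phi1 a1 UL 0). set (Wb := Phi1 b1 UL 0).
  assert (HWa : in_box d' Wa) by (apply Phi1_in_box; assumption).
  assert (HWb : in_box d' Wb) by (apply Phi1_in_box; assumption).
  destruct (wave_slope _ _ _ _ _ Hest1 Hid1 a1 b1 UL Ha1 Hb1 HUL) as [A [HA1 [HA2 [EA1 EA2]]]].
  destruct (wave_increment _ _ _ _ _ Hest2 Hid2 a2 b2 Wa Wb ltac:(lra) ltac:(lra) HWa HWb)
    as [B [HB1 [HB2 [EB1 EB2]]]].
  fold Wa Wb in EA1, EA2.
  set (x := b1 - a1) in *. set (y := b2 - a2) in *.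
  set (E1 := fst (Phi2 b2 Wb 0) - fst (Phi2 a2 Wa 0) - fst B * y - fst A * x).
  set (E2 := snd (Phi2 b2 Wb 0) - snd (Phi2 a2 Wa 0) - snd B * y - snd A * x).
  (* [Phi1] moves the base state of [Phi2] by [A x], so the cross term is [O(|a2| |x|)]. *)
  assert (HWx : dist1 Wb Wa <= 2 * S * Rabs x).
  { unfold dist1. rewrite EA1, EA2, !Rabs_mult.
    pose proof (Rabs_triang_inv (fst A) (fst P)). pose proof (Rabs_triang_inv (snd A) (snd P)).
    pose proof (Rabs_pos (fst P)). pose proof (Rabs_pos (snd P)).
    pose proof (Rabs_pos (fst Q)). pose proof (Rabs_pos (snd Q)).
    rewrite <- Rmult_plus_distr_r. apply Rmult_le_compat_r; [apply Rabs_pos | lra]. }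
  assert (Hkappa : Rabs a2 * M2 * dist1 Wb Wa <= 2 * S * M2 * d * Rabs x).
  { replace (2 * S * M2 * d * Rabs x) with (d * M2 * (2 * S * Rabs x)) by ring.
    apply Rmult_le_compat;
      [apply Rmult_le_pos; [apply Rabs_pos | lra] | apply dist1_nonneg |
       apply Rmult_le_compat_r; lra | exact HWx]. }
  assert (HE1 : Rabs E1 <= 2 * S * M2 * d * Rabs x)
    by (unfold E1; rewrite <- EA1; exact (Rle_trans _ _ _ EB1 Hkappa)).
  assert (HE2 : Rabs E2 <= 2 * S * M2 * d * Rabs x)
    by (unfold E2; rewrite <- EA2; exact (Rle_trans _ _ _ EB2 Hkappa)).
  pose proof (perturbed_cramer_bound (fst P) (snd P) (fst Q) (snd Q) (fst A) (snd A) (fst B) (snd B)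
                E1 E2 x y eta (2 * S * M2 * d) S D HD ltac:(lra)) as Hcramer.
  unfold dist1. replace (fst (Phi2 b2 Wb 0) - fst (Phi2 a2 Wa 0)) with (fst A * x + fst B * y + E1)
    by (unfold E1; ring).
  replace (snd (Phi2 b2 Wb 0) - snd (Phi2 a2 Wa 0)) with (snd A * x + snd B * y + E2)
    by (unfold E2; ring).
  apply Hcramer; try lra; pose proof (Rabs_pos (fst A - fst P)); lra.
Qed.

Lemma composite_parameters_stable UL a1 a2 b1 b2 t S D :
  0 < D <= Rabs (det2 P Q) ->
  Rabs (fst P) + Rabs (snd P) + Rabs (fst Q) + Rabs (snd Q) + 1 <= S ->
  eta <= 1 -> 4 * S * eta <= D -> 32 * S * S * M2 * d <= D ->
  in_box d UL -> Rabs a1 < d -> Rabs a2 < d -> Rabs b1 < d -> Rabs b2 < d -> 0 <= t < d ->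
  D * (Rabs (b1 - a1) + Rabs (b2 - a2))
    <= 16 * S * (dist1 (Phi_comp Phi1 Phi2 b1 b2 UL 0) (Phi_comp Phi1 Phi2 a1 a2 UL t)
                 + 2 * (M1 + M2) * (1 + 2 * M2 * d') * (Rabs a1 + Rabs a2) * t).
Proof.
  intros HD HS Heta1 Heta HM2d HUL Ha1 Ha2 Hb1 Hb2 Ht.
  pose proof (composite_inverse_lipschitz UL a1 a2 b1 b2 S D HD HS Heta1 Heta HM2d
                HUL Ha1 Ha2 Hb1 Hb2) as Hinv.
  pose proof (composite_tau_lipschitz UL a1 a2 t HUL Ha1 Ha2 Ht) as Htau.
  pose proof (dist1_triangle (Phi_comp Phi1 Phi2 b1 b2 UL 0) (Phi_comp Phi1 Phi2 a1 a2 UL t)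
                (Phi_comp Phi1 Phi2 a1 a2 UL 0)) as Htri.
  pose proof (Rabs_pos (fst P)). pose proof (Rabs_pos (snd P)).
  pose proof (Rabs_pos (fst Q)). pose proof (Rabs_pos (snd Q)).
  eapply Rle_trans; [exact Hinv|].
  apply Rmult_le_compat_l; lra.
Qed.

End CompositeWave.

Lemma wave_pair_estimates gam ainf lam1 lam2 r1 r2 Phi1 Phi2 eta theta :
  wave_curve gam ainf 1 lam1 lam2 r1 Phi1 ->
  wave_curve gam ainf 2 lam1 lam2 r2 Phi2 ->
  0 < eta -> 0 < theta ->
  exists M1 M2 d d', 0 <= M1 /\ 0 <= M2 /\ 0 < d /\ d <= d' /\ M2 * d <= theta /\
    around_base d (wave_estimates Phi1 (r1 Ubar 0) eta M1) /\
    around_base d' (wave_estimates Phi2 (r2 Ubar 0) eta M2) /\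
    (forall U t, in_box d U -> 0 <= t < d -> Phi1 0 U t = U) /\
    (forall U t, in_box d' U -> 0 <= t < d' -> Phi2 0 U t = U) /\
    around_base d (fun a rho v t => in_box d' (Phi1 a (rho, v) t)).
Proof.
  intros Hw1 Hw2 Heta Htheta.
  destruct (wave_curve_estimates _ _ _ _ _ _ _ eta Hw2 Heta)
    as [M2 [d2 [HM2 [Hd2 [Hest2 Hid2]]]]].
  destruct (wave_curve_estimates _ _ _ _ _ _ _ eta Hw1 Heta)
    as [M1 [d1 [HM1 [Hd1 [Hest1 Hid1]]]]].
  destruct (wave_curve_in_box _ _ _ _ _ _ _ d2 Hw1 Hd2) as [d3 [Hd3 Hbox1]].
  set (d := Rmin (Rmin d1 d2) (Rmin d3 (theta / (M2 + 1)))).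
  assert (Hd : 0 < d)
    by (repeat apply Rmin_pos; try apply Rdiv_lt_0_compat; lra).
  assert (Hdd : d <= d1 /\ d <= d2 /\ d <= d3 /\ d <= theta / (M2 + 1)).
  { unfold d. pose proof (Rmin_l (Rmin d1 d2) (Rmin d3 (theta / (M2 + 1)))).
    pose proof (Rmin_r (Rmin d1 d2) (Rmin d3 (theta / (M2 + 1)))).
    pose proof (Rmin_l d1 d2). pose proof (Rmin_r d1 d2).
    pose proof (Rmin_l d3 (theta / (M2 + 1))). pose proof (Rmin_r d3 (theta / (M2 + 1))).
    lra. }
  destruct Hdd as [Hdd1 [Hdd2 [Hdd3 Hdtheta]]].
  apply Rle_div_r in Hdtheta; [|lra].
  exists M1, M2, d, d2.
  do 5 (split; [lra|]).
  split; [exact (around_base_le _ _ _ Hdd1 Hest1)|].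
  split; [exact Hest2|].
  split; [intros U t HU Ht; apply Hid1; [exact (in_box_le d d1 U Hdd1 HU) | lra]|].
  split; [exact Hid2|].
  exact (around_base_le _ _ _ Hdd3 Hbox1).
Qed.

Lemma composite_wave_parameters_stable gam ainf lam1 lam2 r1 r2 Phi1 Phi2 :
  char_fields gam ainf lam1 lam2 r1 r2 ->
  wave_curve gam ainf 1 lam1 lam2 r1 Phi1 ->
  wave_curve gam ainf 2 lam1 lam2 r2 Phi2 ->
  exists eps K, 0 < eps /\ 0 < K /\
  forall UL a1 a2 b1 b2 t,
    in_box eps UL -> Rabs a1 < eps -> Rabs a2 < eps -> Rabs b1 < eps -> Rabs b2 < eps ->
    0 <= t < eps ->
    Rabs (b1 - a1) + Rabs (b2 - a2)
      <= K * dist1 (Phi_comp Phi1 Phi2 b1 b2 UL 0) (Phi_comp Phi1 Phi2 a1 a2 UL t)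
         + K * (Rabs a1 + Rabs a2) * t.
Proof.
  intros Hcf Hw1 Hw2.
  set (P := r1 Ubar 0). set (Q := r2 Ubar 0).
  set (D := Rabs (det2 P Q)).
  assert (HD : 0 < D) by exact (Rabs_pos_lt _ (char_fields_det _ _ _ _ _ _ Hcf)).
  set (S := Rabs (fst P) + Rabs (snd P) + Rabs (fst Q) + Rabs (snd Q) + 1).
  assert (HS : 1 <= S).
  { pose proof (Rabs_pos (fst P)). pose proof (Rabs_pos (snd P)).
    pose proof (Rabs_pos (fst Q)). pose proof (Rabs_pos (snd Q)). unfold S. lra. }
  set (eta := Rmin 1 (D / (4 * S))).
  assert (Heta : 0 < eta) by (apply Rmin_pos; [lra | apply Rdiv_lt_0_compat; lra]).
  assert (Heta_small : 4 * S * eta <= D)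
    by (rewrite Rmult_comm; apply Rle_div_r; [lra | apply Rmin_r]).
  destruct (wave_pair_estimates _ _ _ _ _ _ _ _ eta (D / (32 * S * S)) Hw1 Hw2 Heta)
    as [M1 [M2 [d [d' [HM1 [HM2 [Hd [Hdd' [Hsmall [Hest1 [Hest2 [Hid1 [Hid2 Hbox1]]]]]]]]]]]]];
    [apply Rdiv_lt_0_compat; nra|].
  apply Rle_div_r in Hsmall; [|nra].
  set (K1 := 2 * (M1 + M2) * (1 + 2 * M2 * d')).
  assert (HK1 : 0 <= K1)
    by (assert (0 <= M2 * d') by (apply Rmult_le_pos; lra); apply Rmult_le_pos; lra).
  exists d, (16 * S / D * (1 + K1)).
  split; [exact Hd|]. split; [apply Rmult_lt_0_compat; [apply Rdiv_lt_0_compat|]; lra|].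
  intros UL a1 a2 b1 b2 t HUL Ha1 Ha2 Hb1 Hb2 Ht.
  pose proof (composite_parameters_stable Phi1 Phi2 P Q eta M1 M2 d d' Hdd' HM1 HM2 Hest1 Hest2
                Hid1 Hid2 Hbox1 UL a1 a2 b1 b2 t S D (conj HD (Rle_refl D)) (Rle_refl S)
                (Rmin_l _ _) Heta_small ltac:(lra) HUL Ha1 Ha2 Hb1 Hb2 Ht) as Hstable.
  pose proof (dist1_nonneg (Phi_comp Phi1 Phi2 b1 b2 UL 0) (Phi_comp Phi1 Phi2 a1 a2 UL t)).
  set (Y := dist1 (Phi_comp Phi1 Phi2 b1 b2 UL 0) (Phi_comp Phi1 Phi2 a1 a2 UL t)) in *.
  set (T := (Rabs a1 + Rabs a2) * t).
  assert (HT : 0 <= T) by (unfold T; pose proof (Rabs_pos a1); pose proof (Rabs_pos a2); nra).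
  replace (2 * (M1 + M2) * (1 + 2 * M2 * d') * (Rabs a1 + Rabs a2) * t) with (K1 * T)
    in Hstable by (unfold K1, T; ring).
  assert (0 <= S * (K1 * Y + T)) by (apply Rmult_le_pos; nra).
  apply (Rmult_le_reg_l D); [exact HD|].
  replace (D * (16 * S / D * (1 + K1) * Y + 16 * S / D * (1 + K1) * (Rabs a1 + Rabs a2) * t))
    with (16 * S * (1 + K1) * (Y + T)) by (unfold T; field; lra).
  lra.
Qed.

Theorem proposition3p2 (gam ainf : R) (Hgam : 1 < gam) (Hainf : 0 < ainf)
  (lam1 lam2 : state -> R -> R) (r1 r2 : state -> R -> state)
  (Phi1 Phi2 : R -> state -> R -> state) :
  char_fields gam ainf lam1 lam2 r1 r2 ->
  wave_curve gam ainf 1 lam1 lam2 r1 Phi1 ->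
  wave_curve gam ainf 2 lam1 lam2 r2 Phi2 ->
  exists eps1 tau1 C, 0 < eps1 /\ 0 < tau1 /\ 0 < C /\
  forall tau, 0 < tau < tau1 ->
  forall UL UhR UR : state,
    near_Ubar eps1 UL -> near_Ubar eps1 UhR -> near_Ubar eps1 UR ->
  forall a1 a2 b1 b2 : R,
    Rabs a1 < eps1 -> Rabs a2 < eps1 -> Rabs b1 < eps1 -> Rabs b2 < eps1 ->
    (* (a) *)
    (UR = Phi_comp Phi1 Phi2 b1 b2 UL 0 ->
     UR = Phi_comp Phi1 Phi2 a1 a2 UL (tau ^ 2) ->
     Rabs (b1 - a1) <= C * (Rabs a1 + Rabs a2) * tau ^ 2 /\
     Rabs (b2 - a2) <= C * (Rabs a1 + Rabs a2) * tau ^ 2) /\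
    (* (b) *)
    (UR = Phi_comp Phi1 Phi2 b1 b2 UL 0 ->
     UhR = Phi_comp Phi1 Phi2 a1 a2 UL (tau ^ 2) ->
     Rabs (b1 - a1) <= C * (Rabs a1 + Rabs a2) * tau ^ 2 + C * dist2 UR UhR /\
     Rabs (b2 - a2) <= C * (Rabs a1 + Rabs a2) * tau ^ 2 + C * dist2 UR UhR).
Proof.
  intros Hcf Hw1 Hw2.
  destruct (composite_wave_parameters_stable _ _ _ _ _ _ _ _ Hcf Hw1 Hw2)
    as [eps [K [Heps [HK Hstable]]]].
  exists eps, (Rmin 1 eps), (2 * K).
  split; [exact Heps|]. split; [apply Rmin_pos; lra|]. split; [lra|].
  intros tau [Htau0 Htau] UL UhR UR HUL _ _ a1 a2 b1 b2 Ha1 Ha2 Hb1 Hb2.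
  pose proof (Rmin_l 1 eps). pose proof (Rmin_r 1 eps).
  assert (Ht : 0 <= tau ^ 2 < eps) by (split; nra).
  pose proof (Hstable UL a1 a2 b1 b2 (tau ^ 2) (near_Ubar_in_box _ _ HUL) Ha1 Ha2 Hb1 Hb2 Ht)
    as Hb.
  assert (HT : 0 <= K * (Rabs a1 + Rabs a2) * tau ^ 2).
  { pose proof (Rabs_pos a1). pose proof (Rabs_pos a2).
    apply Rmult_le_pos; [apply Rmult_le_pos|]; nra. }
  pose proof (Rabs_pos (b1 - a1)). pose proof (Rabs_pos (b2 - a2)).
  split; intros HR HR'; rewrite <- HR, <- HR' in Hb.
  - rewrite dist1_refl, Rmult_0_r in Hb. split; lra.
  - pose proof (dist1_le_dist2 UR UhR).
    assert (K * dist1 UR UhR <= 2 * K * dist2 UR UhR) by nra.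
    split; lra.
Qed.
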